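(* The complete bipartite graph $K_{4,4}$ is B-factorizable.
   Context: Let $V$ be a finite set with $|V|$ even. $K=\binom{V}{2}$ is the set of 2-element subsets of $V$. An equal partition of $V$ is an unordered pair $\{H,A\}$ of disjoint subsets with $H\cup A=V$ and $|H|=|A|=|V|/2$; $C=C(V)$ is the set of equal partitions. For $c=\{H,A\}\in C$, $B_c$ is the complete bipartite graph with parts $H$ and $A$. Vectors live in $\mathbb N^{K\cup C}$ with $\mathbb N=\{0,1,2,\dots\}$; $v|_K$ denotes the restriction to coordinates in $K$. For $E\subseteq K$, $\chi_E\in\{0,1\}^K$ is its indicator vector. For $E\subseteq K$ and $c\in C$, $\chi_{E,c}\in\mathbb N^{K\cup C}$ has $K$-components $\chi_E$ and $C$-components equal to the indicator of $c$. $PM(V)=\{\chi_{q,c}: c\in C,\ q\text{ a perfect matching of }B_c\}$. For $\mathcal M\subseteq\mathbb N^{K\cup C}$, $\mathbf N(\mathcal M)$ is the set of finite nonnegative integer combinations of elements of $\mathcal M$, and $\overline{\mathbf N}(\mathcal M)=\{v\in\mathbb N^{K\cup C}: kv\in\mathbf N(\mathcal M)\text{ for some integer }k\ge1\}$. A regular graph $G=(V,E)$ is B-factorizable if every $v\in\overline{\mathbf N}(PM(V))$ with $v|_K=\chi_E$ belongs to $\mathbf N(PM(V))$. *)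

From mathcomp Require Import all_boot.
Set Implicit Arguments. Unset Strict Implicit. Unset Printing Implicit Defensive.

Definition Kt (V : finType) := {e : {set V} | #|e| == 2}.

(* C = equal partitions {H, A}, represented as the set of its two blocks *)
Definition is_eqpart (V : finType) (P : {set {set V}}) : bool :=
  [exists H : {set V}, (#|H|.*2 == #|V|) && (P == [set H; ~: H])].
Definition Ct (V : finType) := {P : {set {set V}} | is_eqpart P}.

Definition idx (V : finType) := (Kt V + Ct V)%type.
Definition vec (V : finType) := {ffun idx V -> nat}.

Definition chi (V : finType) (E : {set Kt V}) (e : Kt V) : nat := e \in E.

Definition chiEc (V : finType) (E : {set Kt V}) (c : Ct V) : vec V :=
  [ffun i => match i with inl e => nat_of_bool (e \in E)
                        | inr c' => nat_of_bool (c' == c) end].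

(* q is a perfect matching of B_c: every edge of q joins the two blocks of c
   (meets each block in exactly one vertex), and every vertex lies in
   exactly one edge of q *)
Definition is_pm_of (V : finType) (c : Ct V) (q : {set Kt V}) : bool :=
  [forall e in q, forall X in val c, #|val e :&: X| == 1] &&
  [forall x : V, #|[set e in q | x \in val e]| == 1].

Definition PM (V : finType) : pred (vec V) :=
  fun v => [exists c : Ct V, exists q : {set Kt V}, is_pm_of c q && (v == chiEc q c)].

(* N(M): finite nonnegative integer combinations (sums of finite lists with repetition) *)
Definition NN (V : finType) (M : pred (vec V)) (v : vec V) : Prop :=
  exists s : seq (vec V), all M s /\ forall i, v i = \sum_(m <- s) m i.

Definition NNbar (V : finType) (M : pred (vec V)) (v : vec V) : Prop :=
  exists k : nat, 0 < k /\ NN M [ffun i => k * v i].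

Definition B_factorizable (V : finType) (E : {set Kt V}) : Prop :=
  forall v : vec V, NNbar (@PM V) v -> (forall e : Kt V, v (inl e) = chi E e) ->
    NN (@PM V) v.

Definition Kbip (V : finType) (H : {set V}) : {set Kt V} :=
  [set e : Kt V | #|val e :&: H| == 1].

From mathcomp Require Import all_boot.
Set Implicit Arguments. Unset Strict Implicit. Unset Printing Implicit Defensive.

(* Number the vertices 0..7 with H = {0,..,3}: an
   edge is a pair (i, j) joining i to 4 + j, a perfect matching of K_{4,4} is a
   permutation s of {0,..,3}, and an equal partition c is a "label", the 8-bit
   indicator of the block containing 0; s is a perfect matching of B_c iff it
   "crosses" c.  If k v is a sum of PM generators and v|_K = chi_{K_{4,4}}, every
   generator lies in K_{4,4}, so the weights w c = v c satisfy (1) sum_c w c = 4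
   (counting edges) and (2) sum_c w c * min_{s crossing c} |F /\ s| <= |F| for
   every edge set F.  So w is a multiset of four labels, and a computation over
   all C(38,4) of them shows that each either violates one of 98 listed
   inequalities (2), or admits one of the 24 1-factorizations of K_{4,4} into
   matchings crossing its four labels -- which writes v as a sum of four PM
   generators. *)

Fixpoint allbits (n : nat) : seq (seq bool) :=
  if n is n'.+1 then map (cons true) (allbits n') ++ map (cons false) (allbits n')
  else [:: [::]].
Fixpoint tuples (n m : nat) : seq (seq nat) :=
  if n is n'.+1 then flatten [seq map (cons i) (tuples n' m) | i <- iota 0 m]
  else [:: [::]].

Definition labels : seq (seq bool) :=
  [seq b <- allbits 8 | head false b && (count id b == 4)].
Definition perms4 : seq (seq nat) := [seq s <- tuples 4 4 | uniq s].
Definition all_edges : seq (nat * nat) := [seq (i, j) | i <- iota 0 4, j <- iota 0 4].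

Definition hits (F : seq (nat * nat)) (s : seq nat) : nat :=
  count (fun e => nth 0 s e.1 == e.2) F.
(* The matching s is a perfect matching of B_c for the partition c labelled b. *)
Definition crossing (b : seq bool) (s : seq nat) : bool :=
  all (fun i => nth false b i != nth false b (4 + nth 0 s i)) (iota 0 4).
(* Least number of edges of F used by a perfect matching of B_c (16 if none). *)
Definition min_hits (F : seq (nat * nat)) (b : seq bool) : nat :=
  foldr minn 16 [seq hits F s | s <- perms4 & crossing b s].

Fixpoint expand_from (k : nat) (w : seq nat) : seq nat :=
  if w is x :: w' then nseq x k ++ expand_from k.+1 w' else [::].
Definition expand w := expand_from 0 w.

(* Edge sets F whose inequalities (2) exclude the non-decomposable multisets. *)
Definition ineqs : seq (seq (nat * nat)) := [::
  [:: (0, 0); (0, 1); (0, 3)]; [:: (0, 0); (0, 2); (0, 3)];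
  [:: (0, 1); (0, 2); (0, 3)]; [:: (0, 0); (0, 1); (0, 2)];
  [:: (0, 0); (1, 0); (3, 0)]; [:: (1, 1); (1, 2); (1, 3)];
  [:: (0, 0); (1, 0); (2, 0)]; [:: (0, 1); (1, 1); (3, 1)];
  [:: (0, 2); (1, 2); (3, 2)]; [:: (0, 3); (1, 3); (3, 3)];
  [:: (1, 0); (1, 1); (1, 2)]; [:: (0, 3); (1, 3); (2, 3)];
  [:: (1, 0); (1, 1); (1, 3)]; [:: (1, 0); (1, 2); (1, 3)];
  [:: (0, 1); (1, 1); (2, 1)]; [:: (0, 2); (1, 2); (2, 2)];
  [:: (0, 0); (0, 1); (1, 0); (1, 1)]; [:: (1, 0); (1, 2); (3, 0); (3, 2)];
  [:: (2, 0); (2, 1); (3, 0); (3, 1)]; [:: (1, 1); (1, 3); (3, 1); (3, 3)];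
  [:: (1, 0); (1, 3); (2, 0); (2, 3)]; [:: (0, 0); (0, 3); (3, 0); (3, 3)];
  [:: (1, 0); (1, 1); (3, 0); (3, 1)]; [:: (0, 0); (0, 2); (1, 0); (1, 2)];
  [:: (0, 1); (0, 3); (1, 1); (1, 3)]; [:: (1, 2); (1, 3); (3, 2); (3, 3)];
  [:: (0, 1); (0, 2); (1, 1); (1, 2)]; [:: (0, 0); (0, 3); (1, 0); (1, 3)];
  [:: (0, 0); (0, 1); (3, 0); (3, 1)]; [:: (1, 0); (1, 1); (2, 0); (2, 1)];
  [:: (1, 1); (1, 2); (3, 1); (3, 2)]; [:: (1, 0); (1, 3); (3, 0); (3, 3)];
  [:: (0, 0); (0, 2); (3, 0); (3, 2)]; [:: (0, 1); (0, 3); (3, 1); (3, 3)];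
  [:: (2, 3)]; [:: (0, 0)]; [:: (0, 1)]; [:: (3, 0)]; [:: (0, 2)];
  [:: (3, 1)]; [:: (0, 3)]; [:: (1, 0)]; [:: (1, 1)]; [:: (1, 2)];
  [:: (1, 3)]; [:: (2, 0)]; [:: (2, 1)]; [:: (3, 2)]; [:: (2, 2)];
  [:: (3, 3)]; [:: (0, 0); (0, 1)]; [:: (0, 0); (0, 2)]; [:: (0, 0); (0, 3)];
  [:: (0, 1); (0, 2)]; [:: (0, 1); (0, 3)]; [:: (0, 2); (0, 3)];
  [:: (0, 3); (3, 3)]; [:: (0, 0); (1, 0)]; [:: (1, 0); (3, 0)];
  [:: (1, 1); (3, 1)]; [:: (0, 1); (1, 1)]; [:: (1, 0); (1, 1)];
  [:: (1, 2); (3, 2)]; [:: (0, 2); (1, 2)]; [:: (1, 0); (1, 2)];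
  [:: (1, 1); (1, 2)]; [:: (0, 3); (2, 3)]; [:: (1, 3); (2, 3)];
  [:: (1, 3); (3, 3)]; [:: (0, 0); (3, 0)]; [:: (0, 3); (1, 3)];
  [:: (1, 0); (1, 3)]; [:: (1, 1); (1, 3)]; [:: (1, 2); (1, 3)];
  [:: (0, 0); (2, 0)]; [:: (2, 0); (2, 3)]; [:: (2, 0); (3, 0)];
  [:: (0, 1); (3, 1)]; [:: (1, 0); (2, 0)]; [:: (3, 0); (3, 1)];
  [:: (0, 1); (2, 1)]; [:: (2, 1); (2, 3)]; [:: (2, 1); (3, 1)];
  [:: (0, 2); (3, 2)]; [:: (1, 1); (2, 1)]; [:: (3, 0); (3, 2)];
  [:: (2, 0); (2, 1)]; [:: (3, 1); (3, 2)]; [:: (2, 2); (3, 2)];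
  [:: (2, 2); (2, 3)]; [:: (0, 2); (2, 2)]; [:: (1, 2); (2, 2)];
  [:: (2, 3); (3, 3)]; [:: (3, 0); (3, 3)]; [:: (2, 0); (2, 2)];
  [:: (3, 1); (3, 3)]; [:: (2, 1); (2, 2)]; [:: (3, 2); (3, 3)]].

(* The 24 1-factorizations of K_{4,4}, each as a list of four matchings. *)
Definition factorizations : seq (seq (seq nat)) := [::
  [:: [:: 0; 1; 2; 3]; [:: 1; 0; 3; 2]; [:: 2; 3; 0; 1]; [:: 3; 2; 1; 0]];
  [:: [:: 0; 1; 2; 3]; [:: 1; 0; 3; 2]; [:: 2; 3; 1; 0]; [:: 3; 2; 0; 1]];
  [:: [:: 0; 1; 2; 3]; [:: 1; 2; 3; 0]; [:: 2; 3; 0; 1]; [:: 3; 0; 1; 2]];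
  [:: [:: 0; 1; 2; 3]; [:: 1; 3; 0; 2]; [:: 2; 0; 3; 1]; [:: 3; 2; 1; 0]];
  [:: [:: 0; 1; 3; 2]; [:: 1; 0; 2; 3]; [:: 2; 3; 0; 1]; [:: 3; 2; 1; 0]];
  [:: [:: 0; 1; 3; 2]; [:: 1; 0; 2; 3]; [:: 2; 3; 1; 0]; [:: 3; 2; 0; 1]];
  [:: [:: 0; 1; 3; 2]; [:: 1; 2; 0; 3]; [:: 2; 3; 1; 0]; [:: 3; 0; 2; 1]];
  [:: [:: 0; 1; 3; 2]; [:: 1; 3; 2; 0]; [:: 2; 0; 1; 3]; [:: 3; 2; 0; 1]];
  [:: [:: 0; 2; 1; 3]; [:: 1; 0; 3; 2]; [:: 2; 3; 0; 1]; [:: 3; 1; 2; 0]];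
  [:: [:: 0; 2; 1; 3]; [:: 1; 3; 0; 2]; [:: 2; 0; 3; 1]; [:: 3; 1; 2; 0]];
  [:: [:: 0; 2; 1; 3]; [:: 1; 3; 0; 2]; [:: 2; 1; 3; 0]; [:: 3; 0; 2; 1]];
  [:: [:: 0; 2; 1; 3]; [:: 1; 3; 2; 0]; [:: 2; 0; 3; 1]; [:: 3; 1; 0; 2]];
  [:: [:: 0; 2; 3; 1]; [:: 1; 0; 2; 3]; [:: 2; 3; 1; 0]; [:: 3; 1; 0; 2]];
  [:: [:: 0; 2; 3; 1]; [:: 1; 3; 0; 2]; [:: 2; 0; 1; 3]; [:: 3; 1; 2; 0]];
  [:: [:: 0; 2; 3; 1]; [:: 1; 3; 2; 0]; [:: 2; 0; 1; 3]; [:: 3; 1; 0; 2]];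
  [:: [:: 0; 2; 3; 1]; [:: 1; 3; 2; 0]; [:: 2; 1; 0; 3]; [:: 3; 0; 1; 2]];
  [:: [:: 0; 3; 1; 2]; [:: 1; 0; 2; 3]; [:: 2; 1; 3; 0]; [:: 3; 2; 0; 1]];
  [:: [:: 0; 3; 1; 2]; [:: 1; 2; 0; 3]; [:: 2; 0; 3; 1]; [:: 3; 1; 2; 0]];
  [:: [:: 0; 3; 1; 2]; [:: 1; 2; 0; 3]; [:: 2; 1; 3; 0]; [:: 3; 0; 2; 1]];
  [:: [:: 0; 3; 1; 2]; [:: 1; 2; 3; 0]; [:: 2; 1; 0; 3]; [:: 3; 0; 2; 1]];
  [:: [:: 0; 3; 2; 1]; [:: 1; 0; 3; 2]; [:: 2; 1; 0; 3]; [:: 3; 2; 1; 0]];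
  [:: [:: 0; 3; 2; 1]; [:: 1; 2; 0; 3]; [:: 2; 1; 3; 0]; [:: 3; 0; 1; 2]];
  [:: [:: 0; 3; 2; 1]; [:: 1; 2; 3; 0]; [:: 2; 0; 1; 3]; [:: 3; 1; 0; 2]];
  [:: [:: 0; 3; 2; 1]; [:: 1; 2; 3; 0]; [:: 2; 1; 0; 3]; [:: 3; 0; 1; 2]]].

Definition min_hits_table := [seq [seq min_hits F b | F <- ineqs] | b <- labels].
Definition ineq_sizes := [seq size F | F <- ineqs].
Fixpoint violated (sz r1 r2 r3 r4 : seq nat) : bool :=
  match sz, r1, r2, r3, r4 with
  | p :: sz', x1 :: r1', x2 :: r2', x3 :: r3', x4 :: r4' =>
      (p < x1 + x2 + x3 + x4) || violated sz' r1' r2' r3' r4'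
  | _, _, _, _, _ => false end.

Definition crossing_table :=
  [seq [seq [seq crossing b s | s <- D] | D <- factorizations] | b <- labels].
(* Backtracking search for an injective choice of a matching (index < 4) for
   each of four labels, given the boolean rows of admissible matchings. *)
Definition assign4 (x1 x2 x3 x4 : seq bool) : option (seq nat) :=
  let fix go (xs : seq (seq bool)) (used : seq nat) : option (seq nat) :=
    match xs with
    | [::] => Some (rev used)
    | x :: xs' =>
      let fix try (js : seq nat) := match js with
        | [::] => None
        | j :: js' => if nth false x j && (j \notin used) then
                        (if go xs' (j :: used) is Some r then Some r else try js')
                      else try js' end in try [:: 0; 1; 2; 3] end in
  go [:: x1; x2; x3; x4] [::].
Fixpoint find_factorization (Ds : seq (seq (seq nat))) (r1 r2 r3 r4 : seq (seq bool))
  : option (seq (seq nat) * seq nat) :=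
  match Ds, r1, r2, r3, r4 with
  | D :: Ds', x1 :: r1', x2 :: r2', x3 :: r3', x4 :: r4' =>
      if assign4 x1 x2 x3 x4 is Some p then Some (D, p)
      else find_factorization Ds' r1' r2' r3' r4'
  | _, _, _, _, _ => None end.

Definition mk_decomposition (ms : seq nat) (D : seq (seq nat)) (p : seq nat) :=
  [seq (nth 0 ms k, nth [::] D (nth 0 p k)) | k <- iota 0 4].
Definition latin (ps : seq (nat * seq nat)) :=
  all (fun i => all (fun j => count (fun pr => nth 0 pr.2 i == j) ps == 1)
    (iota 0 4)) (iota 0 4).
Definition valid_decomposition (ms : seq nat) (ps : seq (nat * seq nat)) :=
  [&& [seq pr.1 | pr <- ps] == ms,
      all (fun pr => (pr.2 \in perms4) && crossing (nth [::] labels pr.1) pr.2) ps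
    & latin ps].

Definition row_at {T} (M : seq (seq T)) (ms : seq nat) k := nth [::] M (nth 0 ms k).
Definition settled (M : seq (seq nat)) (C : seq (seq (seq bool))) (ms : seq nat) :=
  violated ineq_sizes (row_at M ms 0) (row_at M ms 1) (row_at M ms 2) (row_at M ms 3) ||
  if find_factorization factorizations
       (row_at C ms 0) (row_at C ms 1) (row_at C ms 2) (row_at C ms 3)
  is Some (D, p) then valid_decomposition ms (mk_decomposition ms D p) else false.
Definition all_multisets4 (P : seq nat -> bool) :=
  all (fun a => all (fun b => all (fun c => all (fun d => P [:: a; b; c; d])
     (iota c (35 - c))) (iota b (35 - b))) (iota a (35 - a))) (iota 0 35).
Definition certificate :=
  let M := min_hits_table in let C := crossing_table in all_multisets4 (settled M C).

Lemma certificate_holds : certificate. Proof. vm_compute. reflexivity. Qed.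

Lemma certificate_sorted a b c d : [&& a <= b, b <= c, c <= d & d < 35] ->
  settled min_hits_table crossing_table [:: a; b; c; d].
Proof.
case/and4P => ab bc cd hd; have hc := leq_ltn_trans cd hd.
have hb := leq_ltn_trans bc hc; have ha := leq_ltn_trans ab hb.
have mem_range x y : x <= y -> y < 35 -> y \in iota x (35 - x).
  by move=> hxy hy; rewrite mem_iota hxy subnKC // ltnW // (leq_ltn_trans hxy hy).
have := certificate_holds; rewrite /certificate /all_multisets4.
move=> /allP /(_ a (mem_range 0 a isT ha)) /allP /(_ b (mem_range a b ab hb)).
by move=> /allP /(_ c (mem_range b c bc hc)) /allP /(_ d (mem_range c d cd hd)).
Qed.

Lemma mem_allbits b : b \in allbits (size b).
Proof.
elim: b => [|x b IH] //=; rewrite mem_cat; apply/orP.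
by case: x; [left|right]; exact: map_f.
Qed.

Lemma mem_tuples s m : all (fun x => x < m) s -> s \in tuples (size s) m.
Proof.
elim: s => [|x s IH] //= /andP [xm /IH Hs].
by apply/flatten_mapP; exists x; [rewrite mem_iota | exact: map_f].
Qed.

Lemma mem_labels b : size b = 8 -> head false b -> count id b = 4 -> b \in labels.
Proof. by move=> sb hb cb; rewrite mem_filter hb cb eqxx -sb mem_allbits. Qed.

Lemma mem_perms4 s : size s = 4 -> all (fun x => x < 4) s -> uniq s -> s \in perms4.
Proof. by move=> ss hs us; rewrite mem_filter us -{1}ss mem_tuples. Qed.

Lemma labels_ok :
  all (fun b => (size b == 8) && head false b && (count id b == 4)) labels.
Proof. by vm_compute. Qed.
Lemma labels_uniq : uniq labels. Proof. by vm_compute. Qed.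
Lemma size_labels : size labels = 35. Proof. by vm_compute. Qed.

Lemma perms4_ok : all (fun s => [&& size s == 4, all (fun x => x < 4) s, uniq s,
   all (fun u => count (fun i => (u == i) || (u == 4 + nth 0 s i)) (iota 0 4) == 1)
       (iota 0 8)
   & hits all_edges s == 4]) perms4.
Proof. by vm_compute. Qed.

Definition in_K44 (F : seq (nat * nat)) := all (fun t => (t.1 < 4) && (t.2 < 4)) F.
Lemma ineqs_ok : all in_K44 (all_edges :: ineqs).
Proof. by vm_compute. Qed.

Lemma labelsP b : b \in labels -> [/\ size b = 8, head false b & count id b = 4].
Proof.
by move=> hb; case/andP: (allP labels_ok b hb) => /andP [/eqP -> ->] /eqP ->.
Qed.

Lemma perms4P s : s \in perms4 -> [/\ size s = 4, forall i, i < 4 -> nth 0 s i < 4,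
   forall u, u < 8 -> count (fun i => (u == i) || (u == 4 + nth 0 s i)) (iota 0 4) = 1
   & hits all_edges s = 4].
Proof.
move=> hs; case/and5P: (allP perms4_ok s hs) => /eqP s4 /allP al _ /allP hu /eqP hc.
split=> // [i hi|u hu8]; first by apply: al; rewrite mem_nth ?s4.
by apply/eqP; apply: hu; rewrite mem_iota.
Qed.

Lemma foldr_minn_le d (l : seq nat) x : x \in l -> foldr minn d l <= x.
Proof.
elim: l => [|y l IH] //=; rewrite in_cons => /orP [/eqP <-|/IH h].
  exact: geq_minl.
by rewrite geq_min h orbT.
Qed.

Lemma min_hits_le F b s : s \in perms4 -> crossing b s -> min_hits F b <= hits F s.
Proof. by move=> sp cs; apply/foldr_minn_le/map_f; rewrite mem_filter cs. Qed.

Lemma violatedP (Fl : seq (seq (nat * nat))) b1 b2 b3 b4 :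
  violated [seq size F | F <- Fl] [seq min_hits F b1 | F <- Fl]
    [seq min_hits F b2 | F <- Fl] [seq min_hits F b3 | F <- Fl]
    [seq min_hits F b4 | F <- Fl] ->
  exists2 F, F \in Fl &
    size F < min_hits F b1 + min_hits F b2 + min_hits F b3 + min_hits F b4.
Proof.
elim: Fl => [|F Fl IH] //= /orP [h|/IH [F' h1 h2]]; first by exists F; rewrite ?mem_head.
by exists F'; rewrite // in_cons h1 orbT.
Qed.

Lemma sum_expand_from (f : nat -> nat) k w :
  \sum_(x <- expand_from k w) f x = \sum_(i < size w) nth 0 w i * f (k + i).
Proof.
elim: w k => [|x w IH] k /=; first by rewrite big_nil big_ord0.
rewrite big_cat big_nseq IH big_ord_recl /= addn0 iter_addn_0 mulnC.
by congr (_ + _); apply: eq_bigr => i _; rewrite /bump /= addSnnS.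
Qed.

Lemma expand_from_sorted k w :
  pairwise leq (expand_from k w) &&
  all (fun x => k <= x < k + size w) (expand_from k w).
Proof.
elim: w k => [|x w IH] k //=; case/andP: (IH k.+1) => s1 a1.
rewrite all_cat pairwise_cat s1 andbT -andbA; apply/and4P; split.
- apply/allrelP => y z /nseqP [-> _] zi.
  by case/andP: (allP a1 z zi) => h _; exact: ltnW.
- by elim: x => //= x ->; rewrite andbT; apply/allP => y /nseqP [-> _].
- by apply/allP => y /nseqP [-> _]; rewrite leqnn /= addnS ltnS leq_addr.
- by apply: sub_all a1 => y /andP [h1 h2]; rewrite ltnW //= addnS -addSn.
Qed.

Lemma sum_count (T : Type) (P : pred T) (r : seq T) :
  \sum_(t <- r) (P t : nat) = count P r.
Proof. by elim: r => [|x r IH]; rewrite ?big_nil ?big_cons ?IH. Qed.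

Lemma sum_pick (T : eqType) (r : seq T) x (F : T -> nat) :
  uniq r -> x \in r -> \sum_(y <- r) F y * (y == x) = F x.
Proof.
move=> ur xr; rewrite (big_rem x) //= eqxx muln1 big_seq big1 ?addn0 // => y yr.
have [e|ne] := eqVneq y x; last by rewrite muln0.
by move: yr; rewrite e (mem_rem_uniqF x ur).
Qed.

Lemma count1_iota (p : pred nat) n : count p (iota 0 n) = 1 ->
  exists a, [/\ a < n, p a & forall i, i < n -> p i -> i = a].
Proof.
rewrite -size_filter; case E: (filter p (iota 0 n)) => [|a [|]] //= _.
have : a \in filter p (iota 0 n) by rewrite E mem_head.
rewrite mem_filter mem_iota add0n /= => /andP [pa ha].
exists a; split => // i hi pi.
have : i \in filter p (iota 0 n) by rewrite mem_filter pi mem_iota.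
by rewrite E inE => /eqP.
Qed.

Lemma card_set2I (T : finType) (x y : T) (X : {set T}) :
  x != y -> #|[set x; y] :&: X| = (x \in X) + (y \in X).
Proof.
move=> nxy; have -> : [set x; y] :&: X = [set z in filter (mem X) [:: x; y]].
  by apply/setP => z; rewrite !inE mem_filter !inE andbC.
rewrite cardsE (card_uniqP _) ?filter_uniq /= ?inE ?nxy //.
by case: (x \in X); case: (y \in X).
Qed.

Lemma summand_le (T : finType) (s : seq {ffun T -> nat}) (v : {ffun T -> nat}) k m i :
  (forall i, k * v i = \sum_(m <- s) m i) -> m \in s -> m i <= k * v i.
Proof. by move=> hs ms; rewrite hs (big_rem m) //=; exact: leq_addr. Qed.

Lemma lt8_right j : j < 4 -> 4 + j < 8.
Proof. by rewrite -[8]/(4 + 4) ltn_add2l. Qed.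
Lemma lt8_left i : i < 4 -> i < 8.
Proof. by move/leq_trans; apply. Qed.
Lemma right_lt4F j : (4 + j < 4) = false.
Proof. by rewrite ltnNge leq_addr. Qed.

Section Numbering.
Variables (V : finType) (H : {set V}) (g : 'I_8 -> V) (phi : V -> 'I_8).
Hypotheses (gK : cancel g phi) (phiK : cancel phi g)
  (gH : forall i, (g i \in H) = (i < 4)) (cV : #|V| = 8) (cH : #|H| = 4).

Definition vx (n : nat) : V := g (inord n).

Lemma phi_vx n : n < 8 -> (phi (vx n) : nat) = n.
Proof. by move=> h; rewrite /vx gK inordK. Qed.

Lemma vx_phi x : vx (phi x) = x.
Proof. by rewrite /vx inord_val phiK. Qed.

Lemma vx_in_H n : n < 8 -> (vx n \in H) = (n < 4).
Proof. by move=> h; rewrite /vx gH inordK. Qed.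

Lemma eq_vx x n : n < 8 -> (x == vx n) = (phi x == n :> nat).
Proof. by move=> h; apply/eqP/eqP => [->|<-]; [exact: phi_vx | rewrite vx_phi]. Qed.

Definition edge_set i j := [set vx i; vx (4 + j)].

Lemma vx_neq i j : i < 4 -> j < 4 -> vx i != vx (4 + j).
Proof.
move=> hi hj; apply/negP => /eqP e.
by have := vx_in_H (lt8_left hi); rewrite hi e vx_in_H ?lt8_right ?right_lt4F.
Qed.

Lemma card_edge_set i j : i < 4 -> j < 4 -> #|edge_set i j| == 2.
Proof. by move=> hi hj; rewrite cards2 vx_neq. Qed.

Definition edge0 : Kt V := exist _ (edge_set 0 0) (@card_edge_set 0 0 isT isT).
Definition edge i j : Kt V := insubd edge0 (edge_set i j).

Lemma val_edge i j : i < 4 -> j < 4 -> val (edge i j) = edge_set i j.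
Proof. by move=> hi hj; rewrite /edge insubdK // unfold_in card_edge_set. Qed.

Lemma in_edge x i j : i < 4 -> j < 4 ->
  (x \in val (edge i j)) = (phi x == i :> nat) || (phi x == 4 + j :> nat).
Proof. by move=> hi hj; rewrite val_edge // !inE !eq_vx ?lt8_right ?lt8_left. Qed.

Lemma edge_Kbip i j : i < 4 -> j < 4 -> edge i j \in Kbip H.
Proof.
move=> hi hj; rewrite inE val_edge // card_set2I ?vx_neq //.
by rewrite !vx_in_H ?hi ?right_lt4F ?lt8_right ?lt8_left.
Qed.

Lemma Kbip_edge e : e \in Kbip H -> exists i j, [/\ i < 4, j < 4 & e = edge i j].
Proof.
rewrite inE => /eqP he.
have /cards2P [x [y [nxy exy]]] := valP e.
have crossing_pair x' y' : x' \in H -> y' \notin H -> val e = [set x'; y'] ->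
    exists i j, [/\ i < 4, j < 4 & e = edge i j].
  move=> xH yH exy'.
  have hx : phi x' < 4 by rewrite -vx_in_H // vx_phi.
  have hy : 4 <= phi y' by rewrite leqNgt -vx_in_H // vx_phi.
  have hy' : phi y' - 4 < 4 by rewrite ltn_subLR // addn4.
  exists (phi x'), (phi y' - 4); split => //.
  by apply: val_inj; rewrite val_edge // exy' /edge_set subnKC // !vx_phi.
rewrite exy card_set2I // in he.
case xH: (x \in H) he; case yH: (y \in H) => //= _.
  exact: (crossing_pair x y xH (negbT yH) exy).
by apply: (crossing_pair y x yH (negbT xH)); rewrite exy setUC.
Qed.

Lemma edge_inj i j i' j' : i < 4 -> j < 4 -> i' < 4 -> j' < 4 ->
  edge i j = edge i' j' -> i = i' /\ j = j'.
Proof.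
move=> hi hj hi' hj' e.
have h1 : vx i \in val (edge i' j').
  by rewrite -e in_edge // phi_vx ?lt8_left // eqxx.
have h2 : vx (4 + j) \in val (edge i' j').
  by rewrite -e in_edge // phi_vx ?lt8_right // eqxx orbT.
rewrite in_edge // phi_vx ?lt8_left // in h1.
rewrite in_edge // phi_vx ?lt8_right // in h2.
case/orP: h1 => [/eqP -> |/eqP h]; last by move: hi; rewrite h right_lt4F.
case/orP: h2 => [/eqP h|/eqP h]; first by move: hi'; rewrite -h right_lt4F.
by split => //; apply/eqP; rewrite -(eqn_add2l 4) h.
Qed.

Definition side (b : seq bool) : {set V} := [set x | nth false b (phi x)].

Lemma in_side b n : n < 8 -> (vx n \in side b) = nth false b n.
Proof. by move=> h; rewrite inE phi_vx. Qed.

Lemma card_side b : size b = 8 -> #|side b| = count id b.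
Proof.
move=> sb; have -> : side b = phi @^-1: [set i : 'I_8 | nth false b i].
  by apply/setP => x; rewrite !inE.
rewrite -(can2_imset_pre _ gK phiK) card_imset; last exact: can_inj gK.
rewrite -sum1_card -sum1_count (big_nth false) sb big_mkord.
by apply: eq_bigl => i; rewrite inE.
Qed.

Lemma eqpart_of (X : {set V}) : #|X| = 4 -> is_eqpart [set X; ~: X].
Proof. by move=> hX; apply/existsP; exists X; rewrite hX cV eqxx. Qed.

Definition part0 : Ct V :=
  @exist _ (fun P : {set {set V}} => is_eqpart P) _ (eqpart_of cH).
Definition part (b : seq bool) : Ct V := insubd part0 [set side b; ~: side b].

Lemma card_side_label b : b \in labels -> #|side b| = 4.
Proof. by case/labelsP => sb _ cb; rewrite card_side. Qed.

Lemma val_part b : b \in labels -> val (part b) = [set side b; ~: side b].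
Proof. by move=> hb; rewrite /part insubdK //; apply/eqpart_of/card_side_label. Qed.

Lemma vx0_side b : b \in labels -> vx 0 \in side b.
Proof. by case/labelsP => _ + _; rewrite in_side //; case: b. Qed.

Lemma part_inj b b' : b \in labels -> b' \in labels -> part b = part b' -> b = b'.
Proof.
move=> hb hb' e.
have : side b \in val (part b') by rewrite -e val_part // !inE eqxx.
rewrite val_part // !inE => /orP [] /eqP E; last first.
  by have := vx0_side hb; rewrite E inE vx0_side.
case: (labelsP hb) => sb _ _; case: (labelsP hb') => sb' _ _.
apply: (@eq_from_nth _ false) => [|i]; first by rewrite sb sb'.
by rewrite sb => hi; rewrite -!in_side // E.
Qed.

(* Every equal partition of V is labelled: normalize the block containing vx 0. *)
Lemma part_surj c : exists2 b, b \in labels & c = part b.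
Proof.
case: c => P hP; case/existsP: (hP) => X /andP [/eqP hX /eqP eP].
have cX : #|X| = 4 by have := congr1 half hX; rewrite cV doubleK.
pose X' := if vx 0 \in X then X else ~: X.
have cX' : #|X'| = 4.
  rewrite /X'; case: ifP => _ //.
  by apply/eqP; rewrite -(eqn_add2l #|X|) cardsC cX cV.
have eP' : P = [set X'; ~: X'] by rewrite eP /X'; case: ifP; rewrite // setCK setUC.
pose b := mkseq (fun n => vx n \in X') 8.
have sb : size b = 8 by rewrite size_mkseq.
have sideE : side b = X' by apply/setP => x; rewrite inE nth_mkseq // vx_phi.
have hb : b \in labels.
  apply: mem_labels; rewrite -?(card_side sb) ?sideE //.
  by rewrite /= /X'; case: ifP => //; rewrite inE => ->.
by exists b => //; apply: val_inj; rewrite val_part //= sideE eP'.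
Qed.

Lemma pm_uniq (c : Ct V) (q : {set Kt V}) x e1 e2 : is_pm_of c q ->
  e1 \in q -> e2 \in q -> x \in val e1 -> x \in val e2 -> e1 = e2.
Proof.
case/andP=> _ /forallP /(_ x) /cards1P [e he] h1 h2 x1 x2.
have : e1 \in [set e in q | x \in val e] by rewrite inE h1 x1.
have : e2 \in [set e in q | x \in val e] by rewrite inE h2 x2.
by rewrite he !inE => /eqP -> /eqP ->.
Qed.

Lemma pm_perm (c : Ct V) (q : {set Kt V}) : is_pm_of c q -> {subset q <= Kbip H} ->
  exists b s, [/\ b \in labels, c = part b, s \in perms4, crossing b s &
     forall i j, i < 4 -> j < 4 -> (edge i j \in q) = (nth 0 s i == j)].
Proof.
move=> hpm qK; have [b hb cb] := part_surj c.
have covered i : i < 4 -> exists2 j, j < 4 & edge i j \in q.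
  move=> hi; case/andP: hpm => _ /forallP /(_ (vx i)) /cards1P [e he].
  have : e \in [set e in q | vx i \in val e] by rewrite he inE.
  rewrite inE => /andP [eq xe]; have [i' [j [hi' hj ee]]] := Kbip_edge (qK _ eq).
  move: xe; rewrite ee in_edge // phi_vx ?lt8_left // => /orP [/eqP ii|/eqP ij].
    by exists j; rewrite // ii -ee.
  by move: hi; rewrite ij right_lt4F.
pose s := mkseq (fun i => find (fun j => edge i j \in q) (iota 0 4)) 4.
have hs i : i < 4 -> nth 0 s i < 4 /\ edge i (nth 0 s i) \in q.
  move=> hi; rewrite /s nth_mkseq //; have [j hj hq] := covered i hi.
  have hh : has (fun j => edge i j \in q) (iota 0 4).
    by apply/hasP; exists j; rewrite ?mem_iota.
  have hf : find (fun j => edge i j \in q) (iota 0 4) < 4.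
    by rewrite -[X in _ < X](size_iota 0 4) -has_find.
  by have := nth_find 0 hh; rewrite nth_iota.
have qE i j : i < 4 -> j < 4 -> (edge i j \in q) = (nth 0 s i == j).
  move=> hi hj; case: (hs i hi) => h1 h2; apply/idP/eqP => [hq|<-] //.
  have /(_ (vx i)) := pm_uniq hpm hq h2.
  rewrite !in_edge // phi_vx ?lt8_left // eqxx => /(_ isT isT).
  by case/edge_inj => // _ ->.
exists b, s; split => //.
- apply: mem_perms4; first by rewrite size_mkseq.
    by apply/allP => x /(nthP 0) [i]; rewrite size_mkseq => hi <-; case: (hs i hi).
  apply/(uniqP 0) => i i'; rewrite !inE size_mkseq => hi hi' e.
  case: (hs i hi) => h1 h2; case: (hs i' hi') => h1' h2'; rewrite e in h2.
  have /(_ (vx (4 + nth 0 s i'))) := pm_uniq hpm h2 h2'.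
  rewrite !in_edge // ?phi_vx ?lt8_right // eqxx !orbT => /(_ isT isT).
  by case/edge_inj.
- apply/allP => i; rewrite mem_iota add0n /= => hi; case: (hs i hi) => h1 h2.
  case/andP: hpm => /forall_inP /(_ _ h2) /forall_inP h _.
  have : side b \in val c by rewrite cb val_part // !inE eqxx.
  move/h; rewrite val_edge // /edge_set card_set2I ?vx_neq //.
  rewrite !in_side ?lt8_right ?lt8_left //.
  by case: (nth false b i); case: (nth false b _).
Qed.

Definition matching (s : seq nat) : {set Kt V} :=
  [set e | [exists i : 'I_4, e == edge i (nth 0 s i)]].

Lemma in_matching s i j : s \in perms4 -> i < 4 -> j < 4 ->
  (edge i j \in matching s) = (nth 0 s i == j).
Proof.
move=> hs hi hj; case: (perms4P hs) => _ hs4 _ _.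
rewrite inE; apply/existsP/eqP => [[i' /eqP e]|<-]; last by exists (Ordinal hi).
by case: (edge_inj hi hj (ltn_ord i') (hs4 _ (ltn_ord i')) e) => -> ->.
Qed.

Lemma matching_Kbip s e : s \in perms4 -> e \in matching s -> e \in Kbip H.
Proof.
case/perms4P => _ hs4 _ _; rewrite inE => /existsP [i /eqP ->].
exact: edge_Kbip (ltn_ord i) (hs4 _ (ltn_ord i)).
Qed.

Lemma matching_pm b s : b \in labels -> s \in perms4 -> crossing b s ->
  is_pm_of (part b) (matching s).
Proof.
move=> hb hs hc; case: (perms4P hs) => _ hs4 hcnt _; apply/andP; split.
  apply/forall_inP => e; rewrite inE => /existsP [i /eqP ->].
  have hi := ltn_ord i; have hsi := hs4 _ hi.
  have := allP hc i; rewrite mem_iota add0n => /(_ hi) hne.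
  apply/forall_inP => X; rewrite val_part // !inE => /orP [] /eqP ->;
    rewrite val_edge // /edge_set card_set2I ?vx_neq // ?in_setC !in_side
      ?lt8_right ?lt8_left //;
    by move: hne; case: (nth false b i); case: (nth false b _).
apply/forallP => x; have hu := ltn_ord (phi x).
have [a [ha pa ua]] := count1_iota (hcnt _ hu).
apply/cards1P; exists (edge a (nth 0 s a)); apply/setP => e; rewrite !inE.
apply/andP/eqP => [[/existsP [i /eqP ->]]|->].
  by rewrite in_edge ?hs4 // => pi; rewrite (ua _ (ltn_ord i) pi).
split; first by apply/existsP; exists (Ordinal ha).
by rewrite in_edge ?hs4.
Qed.

Section Weights.
Variable v : vec V.

Definition weight b := v (inr (part b)).

Definition weights := [seq weight b | b <- labels].

Lemma sum_expand_weights f : \sum_(x <- expand weights) f x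
  = \sum_(i <- iota 0 35) weight (nth [::] labels i) * f i.
Proof.
rewrite /expand sum_expand_from size_map size_labels.
rewrite -(big_mkord xpredT (fun i => nth 0 weights i * f (0 + i))).
apply: eq_big_seq => i; rewrite mem_index_iota => /andP [_ hi].
by rewrite (nth_map [::]) ?size_labels.
Qed.

Lemma expand_weights_lt x : x \in expand weights -> x < 35.
Proof.
have /andP [_ /allP hall] := expand_from_sorted 0 weights.
by move/hall; rewrite size_map size_labels.
Qed.

Lemma count_expand_weights i : i < 35 ->
  \sum_(x <- expand weights) (x == i) = weight (nth [::] labels i).
Proof.
move=> hi; rewrite sum_expand_weights (sum_pick (fun i => weight (nth [::] labels i))) //.
by rewrite mem_iota.
Qed.

Hypothesis v_K : forall e, v (inl e) = chi (Kbip H) e.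

Lemma decomposition_NN ps : valid_decomposition (expand weights) ps -> NN (@PM V) v.
Proof.
case/and3P => /eqP labels_ps /allP ps_ok /allP ps_latin.
have hpr pr : pr \in ps -> [/\ pr.1 < 35, nth [::] labels pr.1 \in labels,
    pr.2 \in perms4 & crossing (nth [::] labels pr.1) pr.2].
  move=> hp; case/andP: (ps_ok pr hp) => h1 h2.
  have h0 : pr.1 < 35 by rewrite expand_weights_lt // -labels_ps map_f.
  by split=> //; rewrite mem_nth // size_labels.
exists [seq chiEc (matching pr.2) (part (nth [::] labels pr.1)) | pr <- ps]; split.
  apply/allP => m /mapP [pr hp ->]; case: (hpr pr hp) => _ hl hsg hcp.
  apply/existsP; exists (part (nth [::] labels pr.1)); apply/existsP.
  by exists (matching pr.2); rewrite matching_pm // eqxx.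
case=> [e|c]; rewrite big_map.
  under eq_bigr => pr _ do rewrite ffunE.
  rewrite v_K /chi; case eK: (e \in Kbip H); last first.
    rewrite big1_seq // => pr /andP [_ hp]; case: (hpr pr hp) => _ _ hsg _.
    suff /negbTE -> : e \notin matching pr.2 by [].
    by apply/negP => /(matching_Kbip hsg); rewrite eK.
  have [i [j [hi hj ->]]] := Kbip_edge eK.
  rewrite (eq_big_seq (fun pr => (nth 0 pr.2 i == j) : nat)); last first.
    by move=> pr hp; case: (hpr pr hp) => _ _ hsg _; rewrite in_matching.
  have := ps_latin i; rewrite mem_iota => /(_ hi) /allP /(_ j).
  by rewrite mem_iota sum_count => /(_ hj) /eqP ->.
under eq_bigr => pr _ do rewrite ffunE.
have [b hb ->] := part_surj c; pose i := index b labels.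
have hi : i < 35 by rewrite -size_labels index_mem.
rewrite (eq_big_seq (fun pr => (pr.1 == i) : nat)); last first.
  move=> pr hp; case: (hpr pr hp) => h0 hl _ _; congr nat_of_bool.
  apply/eqP/eqP => [e|->]; last by rewrite nth_index.
  by rewrite /i (part_inj hb hl e) index_uniq ?labels_uniq ?size_labels.
rewrite -(big_map fst xpredT (fun x => (x == i) : nat)) labels_ps.
by rewrite count_expand_weights // nth_index.
Qed.

Section Decomposition.
Variables (k : nat) (s : seq (vec V)).
Hypotheses (k_gt0 : 0 < k) (s_PM : all (@PM V) s)
  (s_sum : forall i, k * v i = \sum_(m <- s) m i).

(* Each generator is chi_{q,c} for the matching q of a crossing permutation:
   its edges carry weight at most k v e, so they all lie in K_{4,4}. *)
Lemma generator_shape m : m \in s -> exists b sg,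
  [/\ b \in labels, sg \in perms4, crossing b sg,
      forall i j, i < 4 -> j < 4 -> m (inl (edge i j)) = (nth 0 sg i == j)
    & forall c, m (inr c) = (c == part b)].
Proof.
move=> ms; case/existsP: (allP s_PM m ms) => c /existsP [q /andP [hpm /eqP em]].
have qK : {subset q <= Kbip H}.
  move=> e eq; apply/negPn/negP => eK.
  have := summand_le (inl e) s_sum ms.
  by rewrite v_K /chi (negbTE eK) muln0 em ffunE eq.
have [b [sg [hb cb hsg hc hq]]] := pm_perm hpm qK.
exists b, sg; split => // [i j hi hj|c']; rewrite em ffunE ?hq //.
by rewrite cb.
Qed.

Lemma edge_sum F : in_K44 F ->
  \sum_(m <- s) \sum_(t <- F) m (inl (edge t.1 t.2)) = k * size F.
Proof.
move=> hF; rewrite exchange_big /= -sum1_size big_distrr /=.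
apply: eq_big_seq => t tF; case/andP: (allP hF t tF) => h1 h2.
by rewrite -s_sum v_K /chi edge_Kbip.
Qed.

Lemma part_sum f : \sum_(m <- s) \sum_(b <- labels) f b * m (inr (part b))
                   = k * \sum_(b <- labels) f b * weight b.
Proof.
rewrite exchange_big big_distrr /=; apply: eq_bigr => b _.
by rewrite -big_distrr /= -s_sum mulnCA.
Qed.

Lemma generator_counts m : m \in s -> exists b sg,
  [/\ b \in labels, sg \in perms4, crossing b sg,
      forall F, in_K44 F -> \sum_(t <- F) m (inl (edge t.1 t.2)) = hits F sg
    & forall f, \sum_(b' <- labels) f b' * m (inr (part b')) = f b].
Proof.
move=> ms; have [b [sg [hb hsg hc hE hL]]] := generator_shape ms.
exists b, sg; split => // [F hF|f].
  rewrite /hits -sum_count; apply: eq_big_seq => t tF.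
  by case/andP: (allP hF t tF) => h1 h2; rewrite hE.
rewrite -(sum_pick f labels_uniq hb); apply: eq_big_seq => b' hb'; rewrite hL.
by congr (_ * nat_of_bool _); apply/eqP/eqP => [/part_inj ->|->].
Qed.

Lemma valid_inequality F : F \in ineqs ->
  \sum_(b <- labels) min_hits F b * weight b <= size F.
Proof.
move=> hF; have hF' : in_K44 F by apply: (allP ineqs_ok); rewrite in_cons hF orbT.
rewrite -(leq_pmul2l k_gt0) -part_sum -edge_sum // !big_seq; apply: leq_sum => m ms.
have [b [sg [hb hsg hc hE hL]]] := generator_counts ms.
by rewrite hE // hL min_hits_le.
Qed.

(* Every generator covers 4 of the 16 edges, so the weights add up to 4. *)
Lemma weight_total : \sum_(b <- labels) weight b = 4.
Proof.
have hF : in_K44 all_edges by case/andP: ineqs_ok.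
have := part_sum (fun _ => 4).
rewrite (eq_big_seq (fun m : vec V => \sum_(t <- all_edges) m (inl (edge t.1 t.2)))).
  rewrite edge_sum // -big_distrr /= => /eqP; rewrite eqn_pmul2l //.
  by rewrite -[16]/(4 * 4) eqn_pmul2l // => /eqP.
move=> m ms; have [b [sg [hb hsg hc hE hL]]] := generator_counts ms.
by rewrite hE // hL; case: (perms4P hsg).
Qed.

Lemma weights_multiset4 : exists a b c d,
  expand weights = [:: a; b; c; d] /\ [&& a <= b, b <= c, c <= d & d < 35].
Proof.
have size4 : size (expand weights) = 4.
  rewrite -sum1_size sum_expand_weights -[RHS]weight_total (big_nth [::]).
  by rewrite size_labels; apply: eq_bigr => i _; rewrite muln1.
have := expand_from_sorted 0 weights.
rewrite -/(expand weights) size_map size_labels.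
case: (expand weights) size4 => [|a [|b [|c [|d [|]]]]] // _ /=; rewrite !add0n.
case/andP => /and4P [/and4P [ab _ _ _] /and3P [bc _ _] /andP [cd _] _].
by case/and5P => _ _ _ hd _; exists a, b, c, d; rewrite ab bc cd hd.
Qed.

Lemma not_violated a b c d : expand weights = [:: a; b; c; d] ->
  [&& a <= b, b <= c, c <= d & d < 35] ->
  ~~ violated ineq_sizes (nth [::] min_hits_table a) (nth [::] min_hits_table b)
       (nth [::] min_hits_table c) (nth [::] min_hits_table d).
Proof.
move=> ew /and4P [ab bc cd hd]; apply/negP.
have hc := leq_ltn_trans cd hd; have hb := leq_ltn_trans bc hc.
have ha := leq_ltn_trans ab hb.
rewrite /min_hits_table /ineq_sizes !(nth_map [::]) ?size_labels //.
case/violatedP => F hF; apply/negP; rewrite -leqNgt.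
have := sum_expand_weights (fun x => min_hits F (nth [::] labels x)).
rewrite ew 4!big_cons big_nil addn0 !addnA => ->.
apply: leq_trans (valid_inequality hF); rewrite (big_nth [::]) size_labels.
by apply/eq_leq/eq_bigr => i _; rewrite mulnC.
Qed.

End Decomposition.
End Weights.

Theorem numbered_B_factorizable : B_factorizable (Kbip H).
Proof.
move=> v [k [k_gt0 [s [s_PM s_sum']]]] v_K.
have s_sum i : k * v i = \sum_(m <- s) m i by rewrite -s_sum' ffunE.
have [a [b [c [d [ew sorted]]]]] := weights_multiset4 v_K k_gt0 s_PM s_sum.
case/orP: (certificate_sorted sorted) => [excluded|].
  by case/negP: (not_violated v_K k_gt0 s_PM s_sum ew sorted); exact: excluded.
rewrite -ew; case: find_factorization => [[D p]|] //.
by move/(decomposition_NN v_K).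
Qed.

End Numbering.

(* Any 8-element V with a 4-element H admits a numbering as above: list H,
   then its complement. *)
Lemma numbering_exists (V : finType) (H : {set V}) : #|V| = 8 -> #|H| = 4 ->
  exists g : 'I_8 -> V, exists phi : V -> 'I_8,
    [/\ cancel g phi, cancel phi g & forall i, (g i \in H) = (i < 4)].
Proof.
move=> cV cH; have [x0 _] : {x0 : V | x0 \in V}.
  by apply/sigW/card_gt0P; rewrite cV.
pose s0 := enum H ++ enum (~: H).
have sH : size (enum H) = 4 by rewrite -cardE.
have sC : size (enum (~: H)) = 4.
  by rewrite -cardE; apply/eqP; rewrite -(eqn_add2l #|H|) cardsC cV cH.
have us : uniq s0.
  rewrite cat_uniq !enum_uniq andbT /=; apply/hasPn => x.
  by rewrite !mem_enum inE => /negbTE ->.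
have ss : size s0 = 8 by rewrite size_cat sH sC.
exists (fun i => nth x0 s0 i), (fun x => inord (index x s0)); split.
- by move=> i; apply: val_inj; rewrite /= index_uniq ?ss // inordK.
- move=> x; have xs : x \in s0 by rewrite mem_cat !mem_enum inE orbN.
  by rewrite inordK ?nth_index // -ss index_mem.
- move=> i; rewrite nth_cat sH; case: ifP => hi.
    have hi' : i < size (enum H) by rewrite sH.
    by have := mem_nth x0 hi'; rewrite mem_enum.
  have hi' : i - 4 < size (enum (~: H)) by rewrite sC ltn_subLR ?addn4 // leqNgt hi.
  by have := mem_nth x0 hi'; rewrite mem_enum inE => /negbTE.
Qed.

Theorem mainTheorem12 (V : finType) (H : {set V}) :
  #|V| = 8 -> #|H| = 4 -> B_factorizable (Kbip H).
Proof.
move=> cV cH; have [g [phi [gK phiK gH]]] := numbering_exists cV cH.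
exact: numbered_B_factorizable gK phiK gH cV cH.
Qed.
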